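(* Let $h$ be a $K$-strongly convex penalty function on $\Delta$, let $p\in\Delta$, and let $\Delta_p=\{x\in\Delta:\operatorname{supp}(x)\supseteq\operatorname{supp}(p)\}$. Then: (i) $D_h(p,x)<+\infty$ whenever $x\in\Delta_p$; (ii) $D_h(p,x)\ge0$ for all $x\in\Delta$, with $D_h(p,x)=0$ if and only if $p=x$; in particular $D_h(p,x)\ge\tfrac12K\|x-p\|^2$ for all $x\in\Delta$; (iii) $D_h(p,x_j)\to D_h(p,x)$ whenever $x_j\to x$ in $\Delta_p$.
   Context: $\Delta$ is the unit simplex of $\mathbb{R}^n$. A $K$-strongly convex penalty function on $\Delta$ is $h:\Delta\to\mathbb{R}$ that is continuous, $C^\infty$ on the relative interior of every face of $\Delta$, and satisfies $h(tx_1+(1-t)x_2)\le th(x_1)+(1-t)h(x_2)-\tfrac12Kt(1-t)\|x_1-x_2\|^2$ for all $x_1,x_2\in\Delta$, $t\in[0,1]$. The Bregman divergence is $D_h(p,x)=h(p)-h(x)-h'(x;p-x)$ for $p,x\in\Delta$, where $h'(x;p-x)=\lim_{t\to0^+}t^{-1}[h(x+t(p-x))-h(x)]$ is the one-sided directional derivative (possibly $-\infty$, in which case $D_h(p,x)=+\infty$). *)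

From HB Require Import structures.
From mathcomp Require Import all_boot all_order all_algebra.
From mathcomp Require Import all_classical all_reals all_analysis.
Set Implicit Arguments. Unset Strict Implicit. Unset Printing Implicit Defensive.
Import Order.TTheory GRing.Theory Num.Theory.
Import numFieldNormedType.Exports.
Local Open Scope classical_set_scope.
Local Open Scope ring_scope.

Section Defs.
Variables (R : realType) (n : nat).
Notation V := 'rV[R]_n.

Definition simplex : set V :=
  [set x | (forall i, 0 <= x ord0 i) /\ \sum_i x ord0 i = 1].

Definition supp (x : V) : set 'I_n := [set i | x ord0 i != 0].

Definition simplex_p (p : V) : set V :=
  [set x | simplex x /\ supp p `<=` supp x].

Definition sqnorm (v : V) : R := \sum_i v ord0 i ^+ 2.

Definition relint_face (S : {set 'I_n}) : set V :=
  [set x | simplex x /\ forall i, (x ord0 i != 0) = (i \in S)].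

Definition tangent_face (S : {set 'I_n}) (v : V) : Prop :=
  (forall i, i \notin S -> v ord0 i = 0) /\ \sum_i v ord0 i = 0.

Fixpoint iter_der (vs : seq V) (f : V -> R) : V -> R :=
  match vs with
  | [::] => f
  | v :: vs' => iter_der vs' ('D_v f)
  end.

Definition smooth_relint (S : {set 'I_n}) (f : V -> R) : Prop :=
  forall vs : seq V, (forall v, v \in vs -> tangent_face S v) ->
    {within relint_face S, continuous (iter_der vs f)} /\
    (forall x v, relint_face S x -> tangent_face S v ->
       derivable (iter_der vs f) x v).

Definition strongly_convex_penalty (K : R) (h : V -> R) : Prop :=
  {within simplex, continuous h} /\
  (forall S : {set 'I_n}, smooth_relint S h) /\
  (forall x1 x2 t, simplex x1 -> simplex x2 -> 0 <= t <= 1 ->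
     h (t *: x1 + (1 - t) *: x2) <=
       t * h x1 + (1 - t) * h x2 - 2^-1 * K * t * (1 - t) * sqnorm (x1 - x2)).

Definition dir_der (h : V -> R) (x d : V) : \bar R :=
  lim ((fun t : R => ((h (x + t *: d) - h x) / t)%:E) @ 0^'+).

(* Bregman divergence D_h(p, x) (= +oo when h'(x; p - x) = -oo) *)
Definition bregman (h : V -> R) (p x : V) : \bar R :=
  ((h p - h x)%:E - dir_der h x (p - x))%E.

End Defs.

From HB Require Import structures.
From mathcomp Require Import all_boot all_order all_algebra.
From mathcomp Require Import all_classical all_reals all_analysis.
From mathcomp Require Import lra ring.
Set Implicit Arguments. Unset Strict Implicit. Unset Printing Implicit Defensive.
Import Order.TTheory GRing.Theory Num.Theory.
Import numFieldNormedType.Exports.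
Local Open Scope classical_set_scope.
Local Open Scope ring_scope.

(* Along the segment from x towards p, convexity makes the difference quotient
   q_x(t) = (h (x + t (p - x)) - h x) / t nondecreasing in t, so h'(x; p - x) is
   its limit as t decreases to 0; strong convexity bounds q_x(t) by
   h p - h x - K/2 (1 - t) |p - x|^2, and letting t go to 0 gives
   D_h(p, x) >= K/2 |x - p|^2, whence (ii).  When supp x contains supp p, the
   direction p - x is tangent to the face whose relative interior contains x, so
   h is differentiable there and D_h(p, x) is finite, which is (i).  The segment
   then also extends slightly beyond x, and monotonicity traps the derivative
   between a backward and a forward quotient, q_x(-s) <= h'(x; p - x) <= q_x(t);
   for fixed s and t both quotients are continuous in x, which gives (iii). *)

Section Simplex.
Variables (R : realType) (n : nat).
Notation V := 'rV[R]_n.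

Definition convex_on_simplex (h : V -> R) : Prop :=
  forall x1 x2 t, simplex x1 -> simplex x2 -> 0 <= t <= 1 ->
  h (t *: x1 + (1 - t) *: x2) <= t * h x1 + (1 - t) * h x2.

Definition strongly_convex_on_simplex (K : R) (h : V -> R) : Prop :=
  forall x1 x2 t, simplex x1 -> simplex x2 -> 0 <= t <= 1 ->
  h (t *: x1 + (1 - t) *: x2) <=
    t * h x1 + (1 - t) * h x2 - 2^-1 * K * t * (1 - t) * sqnorm (x1 - x2).

Lemma sqnorm_ge0 (v : V) : 0 <= sqnorm v.
Proof. by apply: sumr_ge0 => i _; exact: sqr_ge0. Qed.

Lemma sqnormN (v : V) : sqnorm (- v) = sqnorm v.
Proof. by apply: eq_bigr => i _; rewrite mxE sqrrN. Qed.

Lemma sqnorm_eq0 (v : V) : (sqnorm v == 0) = (v == 0).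
Proof.
apply/idP/eqP => [|->]; last by rewrite /sqnorm big1 // => i _; rewrite mxE expr0n.
rewrite psumr_eq0 => [/allP v0|i _]; last exact: sqr_ge0.
apply/rowP => i; rewrite mxE; apply/eqP.
by rewrite -sqrf_eq0; apply: v0; rewrite mem_index_enum.
Qed.

Lemma simplex_le1 (x : V) : simplex x -> forall i, x ord0 i <= 1.
Proof.
move=> [x0 <-] i; rewrite (bigD1 i) //= lerDl.
by apply: sumr_ge0 => j _; exact: x0.
Qed.

Lemma line_conv (x d : V) a c l :
  x + (l * a + (1 - l) * c) *: d = l *: (x + a *: d) + (1 - l) *: (x + c *: d).
Proof. by apply/rowP => i; rewrite !mxE; ring. Qed.

Lemma simplex_line (x p : V) t : simplex x -> simplex p -> t <= 1 ->
  (forall i, p ord0 i != 0 -> - t <= x ord0 i) -> simplex (x + t *: (p - x)).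
Proof.
move=> sx sp t1 margin; split=> [i|].
  rewrite !mxE; have := sx.1 i; have := sp.1 i; have := simplex_le1 sp i.
  have [->|/margin] := eqVneq (p ord0 i) 0 => *; first nra.
  by have [|] := leP 0 t => *; nra.
rewrite /=; under eq_bigr do rewrite !mxE.
by rewrite big_split /= -mulr_sumr sumrB sx.2 sp.2 subrr mulr0 addr0.
Qed.

Lemma simplex_segment (x p : V) t : simplex x -> simplex p -> 0 <= t <= 1 ->
  simplex (x + t *: (p - x)).
Proof.
move=> sx sp /andP[t0 t1]; apply: simplex_line => // i _.
by apply: le_trans (sx.1 i); rewrite oppr_le0.
Qed.

End Simplex.

Section ThreeSlopes.
Variables (R : realFieldType) (f : R -> R) (a b c : R).
Hypotheses (ab : a < b) (bc : b < c).
Hypothesis f_conv : (c - a) * f b <= (c - b) * f a + (b - a) * f c.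

Lemma slope_le_chord : (f b - f a) / (b - a) <= (f c - f a) / (c - a).
Proof.
have ac : a < c := lt_trans ab bc.
rewrite ler_pdivrMr ?subr_gt0 // mulrAC ler_pdivlMr ?subr_gt0 //.
by move: f_conv; set A := f a; set B := f b; set C := f c; nra.
Qed.

Lemma chord_le_slope : (f c - f a) / (c - a) <= (f c - f b) / (c - b).
Proof.
have ac : a < c := lt_trans ab bc.
rewrite ler_pdivrMr ?subr_gt0 // mulrAC ler_pdivlMr ?subr_gt0 //.
by move: f_conv; set A := f a; set B := f b; set C := f c; nra.
Qed.

End ThreeSlopes.

Section Secant.
Variables (R : realType) (n : nat) (h : 'rV[R]_n -> R).
Notation V := 'rV[R]_n.

Definition secant (x d : V) (t : R) : R := (h (x + t *: d) - h x) / t.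

Hypothesis h_convex : convex_on_simplex h.

Lemma convex_along_line (x d : V) a b c :
  simplex (x + a *: d) -> simplex (x + c *: d) -> a < b -> b < c ->
  (c - a) * h (x + b *: d) <= (c - b) * h (x + a *: d) + (b - a) * h (x + c *: d).
Proof.
move=> sa sc ab bc; have ca : 0 < c - a by rewrite subr_gt0 (lt_trans ab).
set l := (c - b) / (c - a).
have l01 : 0 <= l <= 1.
  rewrite /l; apply/andP; split; first by apply: divr_ge0; lra.
  by rewrite ler_pdivrMr // mul1r; lra.
have -> : x + b *: d = l *: (x + a *: d) + (1 - l) *: (x + c *: d).
  by rewrite -line_conv; congr (x + _ *: d); rewrite /l; field; rewrite gt_eqF.
set A := h (x + a *: d); set C := h (x + c *: d).
have -> : (c - b) * A + (b - a) * C = (c - a) * (l * A + (1 - l) * C).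
  by rewrite /l; field; rewrite gt_eqF.
by rewrite ler_pM2l //; exact: h_convex.
Qed.

Lemma secant_le (x d : V) s t : simplex x ->
  simplex (x + s *: d) -> simplex (x + t *: d) -> s != 0 -> t != 0 -> s <= t ->
  secant x d s <= secant x d t.
Proof.
move=> sx ss st s0 t0; rewrite le_eqVlt => /predU1P[-> //|lt_st].
pose g u := h (x + u *: d).
have sx' : simplex (x + 0 *: d) by rewrite scale0r addr0.
have secE u : secant x d u = (g u - g 0) / (u - 0).
  by rewrite /g scale0r addr0 subr0.
have secNE u : secant x d u = (g 0 - g u) / (0 - u).
  by rewrite secE -opprB -(opprB 0) invrN mulrNN.
have [s_gt0|s_lt0] := ltrP 0 s.
  rewrite !secE; apply: (slope_le_chord s_gt0 lt_st).
  exact: convex_along_line.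
have {s0 s_lt0} s_lt0 : s < 0 by rewrite lt_neqAle s0 s_lt0.
have [t_gt0|t_lt0] := ltrP 0 t.
  have conv := convex_along_line ss st s_lt0 t_gt0.
  rewrite secNE secE; apply: le_trans (chord_le_slope s_lt0 t_gt0 conv).
  exact: (slope_le_chord s_lt0 t_gt0 conv).
have {t0 t_lt0} t_lt0 : t < 0 by rewrite lt_neqAle t0 t_lt0.
rewrite !secNE; apply: (chord_le_slope lt_st t_lt0).
exact: convex_along_line.
Qed.

End Secant.

Section StrongConvexity.
Variables (R : realType) (n : nat) (K : R) (h : 'rV[R]_n -> R).
Notation V := 'rV[R]_n.
Hypothesis h_strong : strongly_convex_on_simplex K h.

Lemma strongly_convex_convex : 0 <= K -> convex_on_simplex h.
Proof.
move=> K0 x1 x2 t s1 s2 t01; apply: le_trans (h_strong s1 s2 t01) _.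
rewrite lerBlDr lerDl; move: t01 => /andP[t0 t1].
by rewrite !mulr_ge0 ?sqnorm_ge0 ?invr_ge0 ?subr_ge0.
Qed.

Lemma secant_le_strong (x p : V) t : simplex x -> simplex p -> 0 < t <= 1 ->
  secant h x (p - x) t <= h p - h x - 2^-1 * K * (1 - t) * sqnorm (p - x).
Proof.
move=> sx sp /andP[t0 t1]; rewrite /secant ler_pdivrMr //.
have -> : x + t *: (p - x) = t *: p + (1 - t) *: x.
  by apply/rowP => i; rewrite !mxE; ring.
have := h_strong sp sx (_ : 0 <= t <= 1); rewrite ltW //= => /(_ t1).
by set A := h _; set S := sqnorm _; nra.
Qed.

End StrongConvexity.

Section DirectionalDerivative.
Variables (R : realType) (n : nat) (h : 'rV[R]_n -> R).
Notation V := 'rV[R]_n.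

Lemma secant_cvg_derive (x d : V) : derivable h x d ->
  secant h x d t @[t --> (0 : R)^'] --> 'D_d h x.
Proof.
move=> dh; have -> : secant h x d = fun t => t^-1 *: ((h \o shift x) (t *: d) - h x).
  by apply: boolp.funext => t; rewrite /secant /= (addrC (t *: _) x) mulrC.
by apply: cvg_toP.
Qed.

Lemma cvg_dnbhs_at_right (f : R -> R) (l : R) :
  f t @[t --> (0 : R)^'] --> l -> f t @[t --> (0 : R)^'+] --> l.
Proof. by apply: cvg_trans; apply: cvg_fmap2; apply: within_subset => t /lt0r_neq0. Qed.

Lemma cvg_dnbhs_at_left (f : R -> R) (l : R) :
  f t @[t --> (0 : R)^'] --> l -> f t @[t --> (0 : R)^'-] --> l.
Proof. by apply: cvg_trans; apply: cvg_fmap2; apply: within_subset => t /ltr0_neq0. Qed.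

Lemma dir_der_derive (x d : V) : derivable h x d -> dir_der h x d = ('D_d h x)%:E.
Proof.
move=> dh; apply: cvg_lim => //; apply: cvg_EFin; first exact: nearW.
exact/cvg_dnbhs_at_right/secant_cvg_derive.
Qed.

Lemma dir_der0 (x : V) : dir_der h x 0 = 0%E.
Proof.
rewrite /dir_der; under eq_fun do rewrite scaler0 addr0 subrr mul0r.
exact: cvg_lim (@cvg_cst _ _ _ _ _).
Qed.

End DirectionalDerivative.

Section TowardPoint.
Variables (R : realType) (n : nat) (h : 'rV[R]_n -> R) (p : 'rV[R]_n).
Notation V := 'rV[R]_n.
Hypothesis h_convex : convex_on_simplex h.
Hypothesis sp : simplex p.

Lemma secant_toward_le (x : V) s t : simplex x -> 0 < s -> s <= t -> t <= 1 ->
  secant h x (p - x) s <= secant h x (p - x) t.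
Proof.
move=> sx s0 st t1; have t0 := lt_le_trans s0 st.
apply: secant_le; rewrite ?gt_eqF //; apply: simplex_segment => //.
  by rewrite ltW //= (le_trans st).
by rewrite ltW.
Qed.

Lemma dir_der_le_lim (x : V) (g : R -> R) b : simplex x ->
  (forall t, 0 < t <= 1 -> secant h x (p - x) t <= g t) ->
  g t @[t --> (0 : R)^'+] --> b -> (dir_der h x (p - x) <= b%:E)%E.
Proof.
move=> sx sec_le_g gb; rewrite /dir_der.
have gbE : (g t)%:E @[t --> (0 : R)^'+] --> b%:E by apply: cvg_EFin; first exact: nearW.
rewrite -(cvg_lim _ gbE) //; apply: lee_lim; last 2 first.
- exact: cvgP gbE.
- near=> t; rewrite lee_fin; apply: sec_le_g; apply/andP; split.
    by near: t; exact: nbhs_right_gt.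
  by near: t; apply: nbhs_right_le; exact: ltr01.
apply/cvg_ex; eexists; apply: (nondecreasing_at_right_cvge (BLeft 1)).
  by rewrite bnd_simp.
move=> s t; rewrite !in_itv /= => /andP[s0 _] /andP[_ t1] st.
by rewrite lee_fin; exact: secant_toward_le (ltW t1).
Unshelve. all: by end_near. Qed.

Lemma derivable_toward (x : V) : (forall S, smooth_relint S h) -> simplex_p p x ->
  derivable h x (p - x).
Proof.
move=> h_smooth [sx supp_px]; pose S := [set i | x ord0 i != 0]%SET.
have face_x : relint_face S x by split => // i; rewrite inE.
have tangent : tangent_face S (p - x).
  split; last by under eq_bigr do rewrite !mxE; rewrite sumrB sp.2 sx.2 subrr.
  move=> i; rewrite inE negbK => /eqP xi0; rewrite !mxE xi0 subr0.
  by apply/eqP/negPn/negP => /(supp_px i); rewrite /supp /= xi0 eqxx.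
have nil_tangent (v : V) : v \in [::] -> tangent_face S v by rewrite in_nil.
have [_ dh] := h_smooth S [::] nil_tangent.
exact: dh.
Qed.

Section Derivable.
Variables (x : V).
Hypotheses (sx : simplex x) (dh : derivable h x (p - x)).

Lemma derive_le_secant t : 0 < t <= 1 -> 'D_(p - x) h x <= secant h x (p - x) t.
Proof.
move=> /andP[t0 t1]; apply: cvgr_to_le (cvg_dnbhs_at_right (secant_cvg_derive dh)) _.
by near=> s; apply: secant_toward_le => //; near: s; apply: nbhs_right_le.
Unshelve. all: by end_near. Qed.

Lemma secant_le_derive t : t < 0 -> simplex (x + t *: (p - x)) ->
  secant h x (p - x) t <= 'D_(p - x) h x.
Proof.
move=> t0 st; apply: cvgr_to_ge (cvg_dnbhs_at_right (secant_cvg_derive dh)) _.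
near=> s; have s0 : 0 < s by near: s; exact: nbhs_right_gt.
apply: secant_le; rewrite ?(ltr0_neq0 t0) ?(lt0r_neq0 s0) ?(ltW (lt_trans t0 s0)) //.
apply: simplex_segment => //; rewrite ltW //=.
by near: s; apply: nbhs_right_le; exact: ltr01.
Unshelve. all: by end_near. Qed.

End Derivable.
End TowardPoint.

Lemma within_continuous_cvg (T U : topologicalType) (A : set T) (f : T -> U)
    (I : Type) (F : set_system I) {FF : Filter F} (w : I -> T) (y : T) :
  {within A, continuous f} -> A y -> (\forall j \near F, A (w j)) ->
  w @ F --> y -> f (w j) @[j --> F] --> f y.
Proof.
move=> fc Ay Aw wy; apply: cvg_trans ((subspace_continuousP _ f).1 fc y Ay).
move=> P /= /wy; rewrite !nbhs_simpl /= => wP.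
by apply: filterS2 wP Aw => j; apply.
Qed.

Section DeriveContinuity.
Variables (R : realType) (n : nat) (h : 'rV[R]_n -> R) (p : 'rV[R]_n).
Notation V := 'rV[R]_n.
Hypothesis h_convex : convex_on_simplex h.
Hypothesis h_cont : {within @simplex R n, continuous h}.
Hypothesis h_smooth : forall S, smooth_relint S h.
Hypothesis sp : simplex p.
Variables (u : nat -> V) (x : V).
Hypotheses (su : forall j, simplex_p p (u j)) (sx : simplex_p p x).
Hypothesis ux : u @ \oo --> x.
Let du (j : nat) : derivable h (u j) (p - u j) := derivable_toward sp h_smooth (su j).
(* [derivable] unfolds to a product, which would otherwise make [j] implicit. *)
Arguments du j : clear implicits.
Let dx : derivable h x (p - x) := derivable_toward sp h_smooth sx.

Lemma secant_cvg_seq t :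
  (\forall j \near \oo, simplex (u j + t *: (p - u j))) -> simplex (x + t *: (p - x)) ->
  secant h (u j) (p - u j) t @[j --> \oo] --> secant h x (p - x) t.
Proof.
move=> su_t sx_t; apply: cvgM; last exact: cvg_cst.
apply: cvgB; last exact: within_continuous_cvg h_cont sx.1 (nearW _ (fun j => (su j).1)) ux.
apply: within_continuous_cvg h_cont sx_t su_t _.
by apply: cvgD => //; apply: cvgZ; [exact: cvg_cst | apply: cvgB => //; exact: cvg_cst].
Qed.

Lemma derive_limsup e : 0 < e ->
  \forall j \near \oo, 'D_(p - u j) h (u j) <= 'D_(p - x) h x + e.
Proof.
move=> e0; near (0 : R)^'+ => t.
have t01 : 0 < t <= 1.
  apply/andP; split; first by near: t; exact: nbhs_right_gt.
  by near: t; apply: nbhs_right_le; exact: ltr01.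
have t01w : 0 <= t <= 1 by case/andP: t01 => /ltW -> ->.
have secx : secant h x (p - x) t < 'D_(p - x) h x + e.
  near: t; apply: (cvgr_lt _ (cvg_dnbhs_at_right (secant_cvg_derive dx))).
  by rewrite ltrDl.
have su_t : \forall j \near \oo, simplex (u j + t *: (p - u j)).
  by apply: nearW => j; exact: simplex_segment (su j).1 sp t01w.
have secu := secant_cvg_seq su_t (simplex_segment sx.1 sp t01w).
near=> j; apply: le_trans (derive_le_secant h_convex sp (su j).1 (du j) t01) _.
by near: j; apply: (cvgr_le _ secu).
Unshelve. all: by end_near. Qed.

Lemma derive_liminf e : 0 < e ->
  \forall j \near \oo, 'D_(p - x) h x - e <= 'D_(p - u j) h (u j).
Proof.
move=> e0; have x_pos i : p ord0 i != 0 -> 0 < x ord0 i.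
  by move=> /(sx.2 i) xi0; rewrite lt0r xi0 sx.1.1.
near (0 : R)^'- => t.
have t0 : t < 0 by near: t; exact: nbhs_left_lt.
have margin : forall i, p ord0 i != 0 -> - t <= x ord0 i / 2.
  near: t; apply: filter_forall => i.
  have [_|/x_pos xi] := eqVneq (p ord0 i) 0; first exact: nearW.
  apply: filterS (nbhs_left_ge (_ : - (x ord0 i / 2) < 0)) => [s|].
    by rewrite lerNl.
  by rewrite oppr_lt0 divr_gt0.
have sx_t : simplex (x + t *: (p - x)).
  apply: (simplex_line sx.1 sp (ltW (lt_trans t0 ltr01))) => i pi.
  by have := margin i pi; have := x_pos i pi; lra.
have secx : 'D_(p - x) h x - e < secant h x (p - x) t.
  near: t; apply: (cvgr_gt _ (cvg_dnbhs_at_left (secant_cvg_derive dx))).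
  by rewrite ltrBlDr ltrDl.
have u_margin : \forall j \near \oo, forall i, p ord0 i != 0 -> x ord0 i / 2 < u j ord0 i.
  apply: filter_forall => i.
  have [_|/x_pos xi] := eqVneq (p ord0 i) 0; first exact: nearW.
  have ui : (fun j => u j ord0 i) @ \oo --> x ord0 i.
    exact: (continuous_cvg _ (@coord_continuous R 1 n ord0 i x) ux).
  by apply: filterS (cvgr_gt _ ui _ (_ : x ord0 i / 2 < x ord0 i)) => [j ? _|]; lra.
have su_t : \forall j \near \oo, simplex (u j + t *: (p - u j)).
  apply: filterS u_margin => j uj.
  apply: (simplex_line (su j).1 sp (ltW (lt_trans t0 ltr01))) => i pi.
  by have := margin i pi; have := uj i pi; lra.
have secu := secant_cvg_seq su_t sx_t.
near=> j; apply: le_trans (secant_le_derive h_convex sp (su j).1 (du j) t0 _).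
  by near: j; apply: (cvgr_ge _ secu).
by near: j.
Unshelve. all: by end_near. Qed.

Lemma derive_cvg_seq : 'D_(p - u j) h (u j) @[j --> \oo] --> 'D_(p - x) h x.
Proof.
apply/cvgrPdist_le => e e0; apply: filterS2 (derive_limsup e0) (derive_liminf e0).
by move=> j up lo; rewrite ler_distl; apply/andP; split; lra.
Qed.

End DeriveContinuity.

Section Bregman.
Variables (R : realType) (n : nat) (h : 'rV[R]_n -> R).
Notation V := 'rV[R]_n.

Lemma bregman_derivable (p x : V) : derivable h x (p - x) ->
  bregman h p x = (h p - h x - 'D_(p - x) h x)%:E.
Proof. by move=> dh; rewrite /bregman dir_der_derive. Qed.

Lemma bregman_self (x : V) : bregman h x x = 0%E.
Proof. by rewrite /bregman !subrr dir_der0 sube0. Qed.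

Lemma bregman_ge_sqnorm (K : R) (p x : V) : 0 <= K ->
  strongly_convex_on_simplex K h -> simplex p -> simplex x -> ((2^-1 * K * sqnorm (x - p))%:E <= bregman h p x)%E.
Proof.
move=> K0 h_strong sp sx; set b := h p - h x - 2^-1 * K * sqnorm (p - x).
pose g t := h p - h x - 2^-1 * K * (1 - t) * sqnorm (p - x).
have gb : g t @[t --> (0 : R)^'+] --> b.
  have -> : b = g 0 by rewrite /g /b subr0 mulr1.
  apply: cvg_at_right_filter; apply: cvgB; first exact: cvg_cst.
  apply: cvgM; last exact: cvg_cst.
  by apply: cvgM; [exact: cvg_cst | apply: cvgB; [exact: cvg_cst | exact: cvg_id]].
have := dir_der_le_lim (strongly_convex_convex h_strong K0) sp sx
  (fun t => secant_le_strong h_strong sx sp) gb.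
rewrite /bregman -sqnormN opprB; case: (dir_der h x (p - x)) => [r| |] //=.
  by rewrite !lee_fin /b; lra.
by rewrite leey.
Qed.

End Bregman.

Theorem propositionC2 (R : realType) (n : nat) (K : R) (h : 'rV[R]_n -> R)
    (p : 'rV[R]_n) :
  0 < K -> strongly_convex_penalty K h -> simplex p ->
  (* (i) *)
  (forall x, simplex_p p x -> (bregman h p x < +oo)%E) /\
  (* (ii) *)
  (forall x, simplex x ->
     (0 <= bregman h p x)%E /\
     (bregman h p x = 0%E <-> p = x) /\
     ((2^-1 * K * sqnorm (x - p))%:E <= bregman h p x)%E) /\
  (* (iii) *)
  (forall (u : nat -> 'rV[R]_n) (x : 'rV[R]_n),
     (forall j, simplex_p p (u j)) -> simplex_p p x -> u @ \oo --> x ->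
     (fun j => bregman h p (u j)) @ \oo --> bregman h p x).
Proof.
move=> K_gt0 [h_cont [h_smooth h_strong]] sp.
have h_convex := strongly_convex_convex h_strong (ltW K_gt0).
have bregmanE x : simplex_p p x -> bregman h p x = (h p - h x - 'D_(p - x) h x)%:E.
  by move=> spx; rewrite bregman_derivable //; exact: derivable_toward.
split; [|split].
- by move=> x /bregmanE ->; rewrite ltry.
- move=> x sx; have lb := bregman_ge_sqnorm (ltW K_gt0) h_strong sp sx.
  have cK : 0 < 2^-1 * K by rewrite mulr_gt0.
  split; first by apply: le_trans lb; rewrite lee_fin mulr_ge0 ?sqnorm_ge0 ?ltW.
  split=> //; split=> [B0|<-]; last exact: bregman_self.
  apply/eqP; rewrite eq_sym -subr_eq0 -sqnorm_eq0 eq_le sqnorm_ge0 andbT.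
  by move: lb; rewrite B0 lee_fin pmulr_rle0.
- move=> u x su sx ux; rewrite (bregmanE x sx).
  under eq_fun do rewrite bregmanE //.
  apply: cvg_EFin; first exact: nearW.
  apply: cvgB; last exact: derive_cvg_seq.
  apply: cvgB; first exact: cvg_cst.
  exact: within_continuous_cvg h_cont sx.1 (nearW _ (fun j => (su j).1)) ux.
Qed.
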